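(* Let $G$ be a $(k+1)$-critical hypergraph with $k\ge3$. If there exist a vertex $v\in V(G)$ and an edge $e\in E(G)$ such that $v$ is a separating vertex of $G-e$ (regardless of whether $v\in e$), then $G$ is a Hajós join of two hypergraphs.
   Context: A hypergraph is a pair $G=(V,E)$ of finite sets with $E\subseteq 2^V$ and $|e|\ge2$ for all $e\in E$ (no multiple edges). A coloring requires every edge to contain two vertices of different colors; $\chi$ is the chromatic number. $G$ is $(k+1)$-critical if $\chi(G)=k+1$ but $\chi(H)\le k$ for every proper subhypergraph $H$. $G-e$ is obtained by deleting the edge $e$. A vertex $v$ is a separating vertex of a hypergraph $H$ if $H$ is the union of two induced subhypergraphs $H_1,H_2$ with $V(H_1)\cap V(H_2)=\{v\}$ and $|V(H_i)|\ge2$. Hajós join: for vertex-disjoint $G_1,G_2$, $e_i\in E(G_i)$, $v_i\in e_i$, delete $e_1,e_2$, identify $v_1,v_2$ into a new vertex $v^*$, and add a new edge $e^*$ equal to $(e_1\cup e_2)\setminus\{v_1,v_2\}$ or to $((e_1\cup e_2)\setminus\{v_1,v_2\})\cup\{v^*\}$. *)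

From mathcomp Require Import all_boot.
Set Implicit Arguments. Unset Strict Implicit. Unset Printing Implicit Defensive.

Record hgraph (T : finType) := HGraph { hV : {set T}; hE : {set {set T}} }.

(* G = (V,E) is a hypergraph: every edge is a subset of V of size >= 2
   (E is a set, so there are no multiple edges). *)
Definition is_hypergraph (T : finType) (G : hgraph T) : Prop :=
  forall e, e \in hE G -> e \subset hV G /\ 2 <= #|e|.

Definition colorable (T : finType) (G : hgraph T) (k : nat) : Prop :=
  exists f : T -> nat, (forall x, x \in hV G -> f x < k) /\
    forall e, e \in hE G -> exists x, exists y,
      [/\ x \in e, y \in e & f x != f y].

Definition chromatic_number_eq (T : finType) (G : hgraph T) (k : nat) : Prop :=
  colorable G k /\ forall j, j < k -> ~ colorable G j.

Definition proper_subhypergraph (T : finType) (H G : hgraph T) : Prop :=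
  [/\ is_hypergraph H, hV H \subset hV G, hE H \subset hE G
    & (hV H, hE H) <> (hV G, hE G)].

(* G is (k+1)-critical *)
Definition critical (T : finType) (G : hgraph T) (k : nat) : Prop :=
  chromatic_number_eq G k.+1 /\
  forall H, proper_subhypergraph H G -> colorable H k.

Definition delete_edge (T : finType) (G : hgraph T) (e : {set T}) : hgraph T :=
  HGraph (hV G) (hE G :\ e).

Definition induced (T : finType) (G : hgraph T) (W : {set T}) : hgraph T :=
  HGraph W [set f in hE G | f \subset W].

Definition separating_vertex (T : finType) (H : hgraph T) (v : T) : Prop :=
  exists W1 W2 : {set T},
    [/\ W1 \subset hV H, W2 \subset hV H,
        W1 :&: W2 = [set v], 2 <= #|W1| & 2 <= #|W2|] /\
    hV H = hV (induced H W1) :|: hV (induced H W2) /\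
    hE H = hE (induced H W1) :|: hE (induced H W2).

(* Hajós join of vertex-disjoint G1 (on T1) and G2 (on T2); disjointness is
   realised by taking the vertex universe option (T1 + T2), where None is the
   new identified vertex v*. *)
Definition hj_map1 (T1 T2 : finType) (v1 : T1) (x : T1) : option (T1 + T2) :=
  if x == v1 then None else Some (inl x).
Definition hj_map2 (T1 T2 : finType) (v2 : T2) (x : T2) : option (T1 + T2) :=
  if x == v2 then None else Some (inr x).

Definition hajos_join (T1 T2 : finType) (G1 : hgraph T1) (G2 : hgraph T2)
    (e1 : {set T1}) (e2 : {set T2}) (v1 : T1) (v2 : T2) (keep_vstar : bool)
    : hgraph (option (T1 + T2)) :=
  let f1 := @hj_map1 T1 T2 v1 in
  let f2 := @hj_map2 T1 T2 v2 in
  let core := ((f1 @: (e1 :\ v1)) :|: (f2 @: (e2 :\ v2))) in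
  let estar := if keep_vstar then None |: core else core in
  HGraph ((f1 @: hV G1) :|: (f2 @: hV G2))
         ([set f1 @: f | f : {set T1} in hE G1 :\ e1] :|: [set f2 @: f | f : {set T2} in hE G2 :\ e2]
            :|: [set estar]).

Definition hiso (S T : finType) (H : hgraph S) (G : hgraph T) : Prop :=
  exists phi : S -> T,
    [/\ {in hV H &, injective phi}, phi @: hV H = hV G
      & hE G = [set phi @: f | f : {set S} in hE H]].

Definition is_hajos_join (T : finType) (G : hgraph T) : Prop :=
  exists (T1 T2 : finType) (G1 : hgraph T1) (G2 : hgraph T2)
         (e1 : {set T1}) (e2 : {set T2}) (v1 : T1) (v2 : T2) (b : bool),
    [/\ is_hypergraph G1, is_hypergraph G2, e1 \in hE G1 & e2 \in hE G2] /\
    v1 \in e1 /\ v2 \in e2 /\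
    hiso (hajos_join G1 G2 e1 e2 v1 v2 b) G.

(* Let X, Y be the two sides of G - e at v, and c a k-colouring of G - e; by
   criticality e is monochromatic under c.  Colourings of the two sides that agree
   at v glue to a colouring of G - e, so if e lay inside one side we could glue a
   k-colouring of G; hence e meets both X \ Y and Y \ X.  If c v differed from the
   colour of e, permuting the colours on Y \ {v} so that e gets a second colour
   (possible as k >= 3) would k-colour G; so c v is the colour of e.  Hence the
   edges e1 = v + (e & X) and e2 = v + (e & Y), being monochromatic, are not edges
   of G, and G is the Hajos join of G[X] + e1 and G[Y] + e2 at v, keeping v* in
   the new edge exactly when v is in e. *)

From mathcomp Require Import all_boot.
Set Implicit Arguments. Unset Strict Implicit. Unset Printing Implicit Defensive.

Definition bichromatic (T : finType) (c : T -> nat) (f : {set T}) : Prop :=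
  exists x y, [/\ x \in f, y \in f & c x != c y].

Definition transp (a b n : nat) : nat := if n == a then b else if n == b then a else n.

Lemma transpK a b : involutive (transp a b).
Proof.
move=> n; rewrite /transp; case: (eqVneq n a) => [->|na].
  by case: (eqVneq b a) => [->|ba]; rewrite ?eqxx.
case: (eqVneq n b) => [->|nb]; first by rewrite eqxx.
by rewrite (negbTE na) (negbTE nb).
Qed.

Lemma transp_inj a b : injective (transp a b).
Proof. exact: can_inj (transpK a b). Qed.

Lemma transpL a b : transp a b a = b.
Proof. by rewrite /transp eqxx. Qed.

Lemma transp_id a b n : n != a -> n != b -> transp a b n = n.
Proof. by move=> na nb; rewrite /transp (negbTE na) (negbTE nb). Qed.

Lemma transp_lt a b k n : a < k -> b < k -> n < k -> transp a b n < k.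
Proof. by move=> ak bk nk; rewrite /transp; do 2 case: ifP => _ //. Qed.

Section Glue.

Variables (T : finType) (X Y : {set T}) (v : T) (c1 c2 : T -> nat) (p : nat -> nat).
Hypotheses (XY : X :&: Y = [set v]) (p_inj : injective p) (pv : p (c2 v) = c1 v).

Definition glue (x : T) : nat := if x \in X then c1 x else p (c2 x).

Lemma glue_in_left x : x \in X -> glue x = c1 x.
Proof. by rewrite /glue => ->. Qed.

Lemma glue_in_right x : x \in Y -> glue x = p (c2 x).
Proof.
move=> xY; rewrite /glue; case: ifP => // xX.
have : x \in X :&: Y by rewrite inE xX xY.
by rewrite XY inE => /eqP ->; rewrite pv.
Qed.

Lemma glue_lt k x :
  (forall y, y \in X -> c1 y < k) -> (forall y, y \in Y -> p (c2 y) < k) ->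
  x \in X :|: Y -> glue x < k.
Proof.
move=> c1k c2k; rewrite inE => /orP[xX|xY].
  by rewrite glue_in_left ?c1k.
by rewrite glue_in_right ?c2k.
Qed.

Lemma glue_bichromatic_left (f : {set T}) :
  f \subset X -> bichromatic c1 f -> bichromatic glue f.
Proof.
move=> fX [x [y [xf yf cxy]]]; exists x, y.
by rewrite !glue_in_left ?(subsetP fX).
Qed.

Lemma glue_bichromatic_right (f : {set T}) :
  f \subset Y -> bichromatic c2 f -> bichromatic glue f.
Proof.
move=> fY [x [y [xf yf cxy]]]; exists x, y.
by rewrite !glue_in_right ?(subsetP fY) ?(inj_eq p_inj).
Qed.

End Glue.

Section Critical.

Variables (T : finType) (G : hgraph T) (k : nat).
Hypotheses (hG : is_hypergraph G) (crit : critical G k).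

Lemma critical_not_colorable : ~ colorable G k.
Proof. exact: crit.1.2 k (ltnSn k). Qed.

Lemma critical_delete_edge_colorable (e : {set T}) :
  e \in hE G -> colorable (delete_edge G e) k.
Proof.
move=> eE; apply: crit.2; split => //=.
- by move=> f; rewrite inE => /andP[_ /hG].
- exact: subD1set.
- by case=> /setP /(_ e); rewrite !inE eqxx eE.
Qed.

Lemma critical_induced_colorable (X : {set T}) :
  X \proper hV G -> colorable (induced G X) k.
Proof.
case/andP=> XV VX; apply: crit.2; split => //=.
- by move=> f; rewrite inE => /andP[/hG[_ ?] ?].
- by apply/subsetP => f; rewrite inE => /andP[].
- by case=> XV'; rewrite XV' subxx in VX.
Qed.

Lemma critical_edge_monochromatic (e : {set T}) (c : T -> nat) :
  (forall x, x \in hV G -> c x < k) ->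
  (forall f, f \in hE G -> f != e -> bichromatic c f) ->
  ~ bichromatic c e.
Proof.
move=> cV cE ce; apply: critical_not_colorable; exists c; split => // f fE.
by case: (eqVneq f e) => [->|fe]; [exact: ce | exact: cE].
Qed.

End Critical.

Definition edge_split (T : finType) (G : hgraph T) (e : {set T}) (v : T)
    (X Y : {set T}) : Prop :=
  [/\ X :&: Y = [set v], hV G = X :|: Y
    & forall f, f \in hE G -> f != e -> f \subset X \/ f \subset Y].

Lemma edge_split_sym (T : finType) (G : hgraph T) e v (X Y : {set T}) :
  edge_split G e v X Y -> edge_split G e v Y X.
Proof.
case=> XY VXY fXY; split; rewrite 1?setIC 1?setUC //.
by move=> f fE fe; case: (fXY f fE fe); [right | left].
Qed.

Lemma separating_vertex_edge_split (T : finType) (G : hgraph T) e v :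
  separating_vertex (delete_edge G e) v ->
  exists X Y, [/\ edge_split G e v X Y, 2 <= #|X| & 2 <= #|Y|].
Proof.
case=> [X [Y [[_ _ XY cX cY] [/= VXY EXY]]]]; exists X, Y; split => //; split => //.
move=> f fE fe; have : f \in hE G :\ e by rewrite in_setD1 fe fE.
by rewrite EXY !inE => /orP[/andP[_ ->] | /andP[_ ->]]; [left | right].
Qed.

Section OneSide.

Variables (T : finType) (G : hgraph T) (k : nat) (e : {set T}) (v : T) (X Y : {set T}).
Variable c : T -> nat.
Hypotheses (hG : is_hypergraph G) (crit : critical G k) (eE : e \in hE G).
Hypotheses (sep : edge_split G e v X Y) (cardY : 2 <= #|Y|).
Hypotheses (cV : forall x, x \in hV G -> c x < k)
  (cE : forall f, f \in hE G -> f != e -> bichromatic c f).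

Lemma edge_not_subset_side : ~ e \subset X.
Proof.
case: sep => XY VXY split_edges eX.
have vX : v \in X by have := set11 v; rewrite -XY inE => /andP[].
have [w wY wX] : exists2 w, w \in Y & w \notin X.
  have [x [y [xY yY xy]]] := card_gt1P cardY.
  have notX z : z \in Y -> z != v -> z \notin X.
    move=> zY zv; apply: contraNN zv => zX.
    by rewrite -in_set1 -XY inE zX zY.
  case: (eqVneq x v) => [xv | xv]; last by exists x; rewrite ?notX.
  by exists y; rewrite ?notX // -xv eq_sym.
have [c1 [c1X c1E]] : colorable (induced G X) k.
  apply: critical_induced_colorable => //; apply/properP; split.
    by rewrite VXY subsetUl.
  by exists w; rewrite // VXY inE wY orbT.
have c1k : c1 v < k := c1X v vX.
have cvk : c v < k by apply: cV; rewrite VXY inE vX.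
have pv : transp (c v) (c1 v) (c v) = c1 v by rewrite transpL.
apply: (critical_not_colorable crit).
exists (glue X c1 c (transp (c v) (c1 v))); split.
  move=> x; rewrite VXY; apply: (glue_lt XY pv) => // y yY.
  by apply: transp_lt => //; apply: cV; rewrite VXY inE yY orbT.
have inX f : f \in hE G -> f \subset X -> bichromatic c1 f.
  by move=> fE fX; apply: c1E; rewrite inE fE fX.
move=> f fE; case: (eqVneq f e) => [-> | fe].
  exact: glue_bichromatic_left _ _ eX (inX e eE eX).
case: (split_edges f fE fe) => fS.
  exact: glue_bichromatic_left _ _ fS (inX f fE fS).
exact: glue_bichromatic_right XY (@transp_inj _ _) pv _ fS (cE fE fe).
Qed.

Lemma edge_meets_other_side : exists2 y, y \in e & y \in Y :\: X.
Proof.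
have /subsetPn [y ye yX] : ~~ (e \subset X) by apply/negP; exact: edge_not_subset_side.
have [eVG _] := hG eE; case: sep => _ VXY _.
by exists y; rewrite // inE yX /=; move: (subsetP eVG y ye); rewrite VXY inE (negbTE yX).
Qed.

End OneSide.

Lemma exists_third_colour (a b : nat) : exists2 c, c < 3 & (c != a) && (c != b).
Proof.
by case: a b => [|[|[|a]]] [|[|[|b]]]; first [by exists 0 | by exists 1 | by exists 2].
Qed.

Definition side_edge (T : finType) (e : {set T}) (v : T) (W : {set T}) : {set T} :=
  v |: (e :&: W).

Section BothSides.

Variables (T : finType) (G : hgraph T) (k : nat) (e : {set T}) (v : T) (X Y : {set T}).
Variable c : T -> nat.
Hypotheses (hG : is_hypergraph G) (crit : critical G k) (k3 : 3 <= k) (eE : e \in hE G).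
Hypotheses (sep : edge_split G e v X Y) (cardX : 2 <= #|X|) (cardY : 2 <= #|Y|).
Hypotheses (cV : forall x, x \in hV G -> c x < k)
  (cE : forall f, f \in hE G -> f != e -> bichromatic c f).

Lemma edge_monochromatic x y : x \in e -> y \in e -> c x = c y.
Proof.
move=> xe ye; apply/eqP/negPn/negP => cxy.
by apply: (critical_edge_monochromatic crit cV cE); exists x, y.
Qed.

Lemma cut_vertex_colour x : x \in e -> c v = c x.
Proof.
move=> xe.
have [z ze zXY] := edge_meets_other_side hG crit eE (edge_split_sym sep) cardX cV cE.
have [y ye yYX] := edge_meets_other_side hG crit eE sep cardY cV cE.
rewrite (edge_monochromatic xe ze); apply/eqP/negPn/negP => cvz.
case: sep => XY VXY split_edges.
have [c' c'3 /andP[c'z c'v]] := exists_third_colour (c z) (c v).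
have c'k : c' < k := leq_trans c'3 k3.
have pv : transp (c z) c' (c v) = c v by rewrite transp_id // eq_sym.
have inV x' : x' \in X :|: Y -> c x' < k by rewrite -VXY; apply: cV.
have czk : c z < k by apply: cV; apply: (subsetP (hG eE).1).
apply: (critical_not_colorable crit).
exists (glue X c c (transp (c z) c')); split.
  move=> x'; rewrite VXY; apply: (glue_lt XY pv) => [x'' x''X | x'' x''Y].
    by apply: inV; rewrite inE x''X.
  by apply: transp_lt => //; apply: inV; rewrite inE x''Y orbT.
move=> f fE; case: (eqVneq f e) => [-> | fe].
  move: zXY yYX; rewrite !inE => /andP[zY zX] /andP[yX yY].
  exists z, y; split => //.
  rewrite glue_in_left // (glue_in_right XY pv) // (edge_monochromatic ye ze) transpL.
  by rewrite eq_sym.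
case: (split_edges f fE fe) => fS.
  exact: glue_bichromatic_left _ _ fS (cE fE fe).
exact: glue_bichromatic_right XY (@transp_inj _ _) pv _ fS (cE fE fe).
Qed.

Lemma side_edge_notin (W : {set T}) :
  v \in W -> ~ e \subset W -> side_edge e v W \notin hE G.
Proof.
move=> vW eW; apply/negP => sE.
have sW : side_edge e v W \subset W by rewrite subUset sub1set vW subsetIr.
have se : side_edge e v W != e by apply: contraPneq eW => <-.
have colour u : u \in side_edge e v W -> c u = c v.
  by rewrite !inE => /orP[/eqP -> | /andP[ue _]] //; rewrite (cut_vertex_colour ue).
have [x [y [xs ys]]] := cE sE se.
by rewrite (colour x xs) (colour y ys) eqxx.
Qed.

End BothSides.

Lemma imset_can (aT rT : finType) (f : aT -> rT) (g : rT -> aT) (A : {set aT}) :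
  cancel f g -> g @: (f @: A) = A.
Proof.
by move=> fK; rewrite -imset_comp (eq_imset _ fK) imset_id.
Qed.

Definition hajos_side (T : finType) (G : hgraph T) (e : {set T}) (v : T) (W : {set T}) :=
  HGraph W (side_edge e v W |: hE (induced G W)).

Lemma hajos_side_hypergraph (T : finType) (G : hgraph T) e v (W : {set T}) z :
  is_hypergraph G -> v \in W -> z \in e :&: W -> z != v ->
  is_hypergraph (hajos_side G e v W).
Proof.
move=> hG vW zeW zv f; rewrite /= !inE => /orP[/eqP -> | /andP[/hG[_ f2] fW]] //.
split; first by rewrite subUset sub1set vW subsetIr.
by apply/card_gt1P; exists v, z; rewrite setU11 eq_sym zv in_setU1 zeW orbT.
Qed.

Definition hj_unmap (T : finType) (v : T) (o : option (T + T)) : T :=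
  if o is Some (inl x) then x else if o is Some (inr x) then x else v.

Lemma hj_map1K (T : finType) (v : T) : cancel (hj_map1 T v) (hj_unmap v).
Proof. by move=> x; rewrite /hj_map1; case: eqP. Qed.

Lemma hj_map2K (T : finType) (v : T) : cancel (hj_map2 T v) (hj_unmap v).
Proof. by move=> x; rewrite /hj_map2; case: eqP. Qed.

Section HajosJoinOfSplit.

Variables (T : finType) (G : hgraph T) (e : {set T}) (v : T) (X Y : {set T}).
Hypotheses (eE : e \in hE G) (eV : e \subset hV G) (sep : edge_split G e v X Y).
Hypotheses (e1E : side_edge e v X \notin hE G) (e2E : side_edge e v Y \notin hE G).

Let J := hajos_join (hajos_side G e v X) (hajos_side G e v Y)
  (side_edge e v X) (side_edge e v Y) v v (v \in e).

Lemma hj_unmap_injective : {in hV J &, injective (hj_unmap v)}.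
Proof.
case: sep => XY _ _ o1 o2; rewrite !inE.
have onv x : x \in X -> x \in Y -> x = v.
  by move=> xX xY; apply/set1P; rewrite -XY inE xX xY.
case/orP=> /imsetP[x xW ->] /orP[] /imsetP[y yW ->];
  rewrite ?hj_map1K ?hj_map2K => xy; subst y => //.
all: by move: xW yW => /= xW yW; rewrite (onv x) // /hj_map1 /hj_map2 eqxx.
Qed.

Lemma hj_unmap_vertices : hj_unmap v @: hV J = hV G.
Proof.
case: sep => _ VXY _.
by rewrite imsetU !imset_can ?VXY //; [exact: hj_map2K | exact: hj_map1K].
Qed.

Lemma hj_unmap_new_edge :
  let core := hj_map1 T v @: (side_edge e v X :\ v) :|:
              hj_map2 T v @: (side_edge e v Y :\ v) in
  hj_unmap v @: (if v \in e then None |: core else core) = e.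
Proof.
case: sep => _ VXY _ core.
have core_e : hj_unmap v @: core = e :\ v.
  rewrite imsetU !imset_can; [|exact: hj_map2K | exact: hj_map1K].
  apply/setP => x; rewrite !inE; case: (x == v) => //=.
  by case xe: (x \in e) => //=; move: (subsetP eV x xe); rewrite VXY inE.
by case: ifP => ve; rewrite ?imsetU1 core_e /= ?setD1K //; apply/setP => x;
  rewrite !inE; case: eqP => // ->; rewrite ve.
Qed.

Lemma hj_unmap_edges : [set hj_unmap v @: f | f : {set option (T + T)} in hE J] = hE G.
Proof.
have edgesK (F : T -> option (T + T)) (S : {set {set T}}) :
    cancel F (hj_unmap v) ->
    [set hj_unmap v @: f | f : {set option (T + T)} in [set F @: g | g : {set T} in S]] = S.
  by move=> FK; apply: imset_can => A; apply: imset_can.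
rewrite /J /hajos_join /= !imsetU imset_set1 !edgesK ?hj_unmap_new_edge;
  [| exact: hj_map2K | exact: hj_map1K].
rewrite !setU1K ?inE ?(negbTE e1E) ?(negbTE e2E) //; case: sep => _ _ split_edges.
apply/setP => f; rewrite !inE; case: (eqVneq f e) => [-> | fe]; first by rewrite eE orbT.
rewrite orbF; case fE: (f \in hE G) => //=.
by case: (split_edges f fE fe) => ->; rewrite ?orbT.
Qed.

Lemma hajos_join_of_split : hiso J G.
Proof.
exists (hj_unmap v); split; first exact: hj_unmap_injective.
  exact: hj_unmap_vertices.
by rewrite hj_unmap_edges.
Qed.

End HajosJoinOfSplit.

Theorem theorem10 (T : finType) (G : hgraph T) (k : nat) :
  is_hypergraph G -> 3 <= k -> critical G k ->
  (exists (v : T) (e : {set T}),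
      v \in hV G /\ e \in hE G /\ separating_vertex (delete_edge G e) v) ->
  is_hajos_join G.
Proof.
move=> hG k3 crit [v [e [_ [eE /separating_vertex_edge_split [X [Y [sep cardX cardY]]]]]]].
have [c [cV cE]] := critical_delete_edge_colorable hG crit eE.
have {}cE f : f \in hE G -> f != e -> bichromatic c f.
  by move=> fE fe; apply: cE; rewrite in_setD1 fe fE.
have sep' := edge_split_sym sep.
have [vX vY] : v \in X /\ v \in Y.
  by case: sep => XY _ _; apply/andP; rewrite -in_setI XY set11.
have [z ze /setDP[zX zY]] := edge_meets_other_side hG crit eE sep' cardX cV cE.
have [y ye /setDP[yY yX]] := edge_meets_other_side hG crit eE sep cardY cV cE.
have eX := edge_not_subset_side hG crit eE sep cardY cV cE.
have eY := edge_not_subset_side hG crit eE sep' cardX cV cE.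
exists T, T, (hajos_side G e v X), (hajos_side G e v Y),
  (side_edge e v X), (side_edge e v Y), v, v, (v \in e).
split.
  split; try exact: setU11.
  - apply: (hajos_side_hypergraph hG vX (z := z)); first by rewrite inE ze zX.
    by apply: contraNneq zY => ->.
  - apply: (hajos_side_hypergraph hG vY (z := y)); first by rewrite inE ye yY.
    by apply: contraNneq yX => ->.
do 2 (split; first exact: setU11).
apply: hajos_join_of_split => //.
- exact: (hG e eE).1.
- exact: side_edge_notin hG crit k3 eE sep cardX cardY cV cE _ vX eX.
- exact: side_edge_notin hG crit k3 eE sep cardX cardY cV cE _ vY eY.
Qed.
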